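(* Let $G$ be a finite abelian group with $|G|\ge3$. Then (1) $[1,\mathsf{r}(G)-1]\subset\Delta^{\ast}(G)$; (2) $d-2\in\Delta^{\ast}(G)$ for every $d\ge3$ with $d\mid\exp(G)$; (3) $|n-r-1|\in\Delta^{\ast}(C_n^r)$ for all $n\ge2$, $r\ge1$ with $n\ne r+1$. In particular, $\max\Delta^{\ast}(G)\ge\max\{\mathsf{r}(G)-1,\exp(G)-2\}$.
   Context: For a subset $G_0$ of an abelian group, $\mathcal{B}(G_0)$ is the monoid of zero-sum sequences over $G_0$, with atoms the minimal zero-sum sequences; $\mathsf{L}(B)$ is the set of lengths of factorizations of $B$ into atoms. For $A\subset\mathbb{Z}$, $\Delta(A)$ is the set of $d\in\mathbb{N}$ such that some $l\in A$ has $A\cap[l,l+d]=\{l,l+d\}$, and $\Delta(G_0)=\bigcup_{B\in\mathcal{B}(G_0)}\Delta(\mathsf{L}(B))$. Then $\Delta^{\ast}(G)=\{\min\Delta(G_0): G_0\subset G,\ \Delta(G_0)\ne\emptyset\}$. If $G\cong C_{n_1}\oplus\cdots\oplus C_{n_r}$ with $1<n_1\mid\cdots\mid n_r$, then $\mathsf{r}(G)=r$ and $\exp(G)=n_r$. *)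

From HB Require Import structures.
From mathcomp Require Import all_boot all_fingroup all_solvable all_algebra.

Set Implicit Arguments.
Unset Strict Implicit.
Unset Printing Implicit Defensive.

(* Sequences over a finite abelian group (written multiplicatively, as
   MathComp finite groups are).  Elements of the free abelian monoid F(G)
   are represented by finite sequences, equality in F(G) being perm_eq. *)

Section ZeroSum.
Variable gT : finGroupType.

Definition zero_sum (s : seq gT) : bool := (\prod_(g <- s) g == 1)%g.

Definition seq_over (G0 : {set gT}) (s : seq gT) : bool := all (mem G0) s.

(* Minimal zero-sum sequence (= atom of B(G0)): nonempty, zero-sum, and no
   proper nonempty subsequence (sub-multiset, i.e. mask m s) is zero-sum. *)
Definition minimal_zero_sum (s : seq gT) : Prop :=
  [/\ s != [::], zero_sum s &
      forall m : bitseq, zero_sum (mask m s) ->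
        mask m s = [::] \/ size (mask m s) = size s].

Definition lengths (B : seq gT) (k : nat) : Prop :=
  exists As : seq (seq gT),
    [/\ size As = k, forall A, A \in As -> minimal_zero_sum A
      & perm_eq (flatten As) B].

End ZeroSum.

Definition delta_set (L : nat -> Prop) (d : nat) : Prop :=
  0 < d /\ exists l, [/\ L l, L (l + d) & forall k, l < k < l + d -> ~ L k].

Definition Delta_of (gT : finGroupType) (G0 : {set gT}) (d : nat) : Prop :=
  exists B : seq gT, [/\ seq_over G0 B, zero_sum B & delta_set (lengths B) d].

Definition Delta_star (gT : finGroupType) (G : {set gT}) (d : nat) : Prop :=
  exists G0 : {set gT},
    [/\ G0 \subset G, Delta_of G0 d & forall d', Delta_of G0 d' -> d <= d'].

Set Warnings "-notation-overridden -ambiguous-paths".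
From HB Require Import structures.
From mathcomp Require Import all_boot all_fingroup all_solvable all_algebra.
From mathcomp Require Import zify.

Set Implicit Arguments.
Unset Strict Implicit.
Unset Printing Implicit Defensive.

(* Take independent elements e_1, ..., e_m of order n (a basis of a copy of
   C_n^m in G), put g = (e_1 ... e_m)^s and G0 = {g, e_1, ..., e_m}.  A sequence
   over G0 is determined up to order by the multiplicities of g and of the e_i,
   which makes the atoms of B(G0) explicit: g^n, the e_i^n, and
   g^t (e_1 ... e_m)^(n-t) for 0 < t < n when s = 1, resp. only g e_1 ... e_m
   when s = -1.  For a suitable c every atom A has |A| + c v_g(A) = n mod nk,
   so all factorization lengths of a sequence over G0 agree mod k, while
   g^n e_1^n ... e_m^n has factorizations of lengths 2 and m + 1 (s = 1,
   k = m - 1), resp. m + 1 and n (s = -1, k = n - m - 1).  Hence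
   min Delta(G0) = k.  Independent families come from a maximal elementary
   abelian subgroup (rank), from one element of order d (exponent), and from
   the unit vectors of C_n^r. *)

Section WeightCriterion.
Variables (gT : finGroupType) (G0 : {set gT}) (w : gT -> nat) (n k : nat).
Hypothesis n_gt0 : 0 < n.
Hypothesis weight_atom : forall A, seq_over G0 A -> minimal_zero_sum A ->
  \sum_(x <- A) w x = n %[mod n * k].

Lemma weight_lengths B l : seq_over G0 B -> lengths B l ->
  \sum_(x <- B) w x = l * n %[mod n * k].
Proof.
move=> /allP B_G0 [As [<- As_atoms pe]].
rewrite -(perm_big _ pe) big_flatten /= -modn_summ.
rewrite (eq_big_seq (fun _ => n %% (n * k))) => [|A AAs].
  by rewrite big_const_seq count_predT iter_addn_0 modnMml mulnC.
apply: weight_atom (As_atoms A AAs); apply/allP => x xA; apply: B_G0.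
by rewrite -(perm_mem pe); apply/flattenP; exists A.
Qed.

Lemma lengths_eq_mod B l1 l2 : seq_over G0 B -> lengths B l1 -> lengths B l2 ->
  l1 = l2 %[mod k].
Proof.
move=> B_G0 L1 L2; apply/eqP; rewrite -(eqn_pmul2r n_gt0) !muln_modl [k * n]mulnC.
by rewrite -(weight_lengths B_G0 L1) (weight_lengths B_G0 L2).
Qed.

Lemma Delta_of_dvd d : Delta_of G0 d -> k %| d.
Proof.
case=> B [B_G0 _ [_ [l [L1 L2 _]]]]; have /eqP := lengths_eq_mod B_G0 L2 L1.
by rewrite -{2}[l]addn0 eqn_modDl mod0n.
Qed.

Lemma Delta_of_gap B l : 0 < k -> seq_over G0 B -> zero_sum B ->
  lengths B l -> lengths B (l + k) -> Delta_of G0 k.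
Proof.
move=> k_gt0 B_G0 zB L1 L2; exists B; split=> //; split=> //.
exists l; split=> // j /andP [lj jlk] Lj; have /eqP := lengths_eq_mod B_G0 Lj L1.
rewrite -[j](subnKC (ltnW lj)) -{3}[l]addn0 eqn_modDl mod0n modn_small; lia.
Qed.

Lemma Delta_star_of_weight (G : {set gT}) B l : G0 \subset G -> 0 < k ->
  seq_over G0 B -> zero_sum B -> lengths B l -> lengths B (l + k) ->
  Delta_star G k.
Proof.
move=> sG0G k_gt0 B_G0 zB L1 L2; exists G0; split=> //.
  exact: Delta_of_gap L1 L2.
by move=> d Dd; apply: dvdn_leq (Delta_of_dvd Dd); case: Dd => ? [_ _ []].
Qed.

End WeightCriterion.

Lemma dvdn_leq_cases d x : d %| x -> x <= d -> x = 0 \/ x = d.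
Proof. by case/dvdnP => [[|[|q]]] ->; [left | right; rewrite mul1n | lia]. Qed.

Lemma dvdn_pred_mul d t : 0 < d -> d %| d.-1 * t -> d %| t.
Proof. by move=> d_gt0 dv; rewrite -(dvdn_addr _ dv) -mulSnr prednK // dvdn_mulr. Qed.

Lemma sum_delta m (j : 'I_m) c : \sum_i c * (i == j) = c.
Proof.
by rewrite (bigD1 j) //= eqxx muln1 big1 ?addn0 // => i /negbTE ->; rewrite muln0.
Qed.

Definition independent (gT : finGroupType) (n m : nat) (e : 'I_m -> gT) :=
  forall a : 'I_m -> nat, (\prod_i e i ^+ a i == 1)%g = [forall i, n %| a i].

Lemma independent_widen (gT : finGroupType) n m m' (le_m'm : m' <= m)
    (e : 'I_m -> gT) :
  independent n e -> independent n (fun i : 'I_m' => e (widen_ord le_m'm i)).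
Proof.
move=> e_indep a; pose b (i : 'I_m) := oapp a 0 (insub (val i) : option 'I_m').
have b_widen j : b (widen_ord le_m'm j) = a j by rewrite /b /= valK.
have b_out (i : 'I_m) : m' <= i -> b i = 0 by move=> le; rewrite /b insubF // ltnNge le.
have -> : (\prod_(i < m') e (widen_ord le_m'm i) ^+ a i = \prod_i e i ^+ b i)%g.
  under eq_bigr => i _ do rewrite -b_widen.
  rewrite -(big_ord_narrow (F := fun i => e i ^+ b i)%g) big_mkcond /=.
  by apply: eq_bigr => i _; case: ltnP => [|/b_out ->].
rewrite e_indep; apply/forallP/forallP => [dvd_b j | dvd_a i].
  by rewrite -b_widen.
by rewrite /b; case: insubP => [j _ _|_]; [exact: dvd_a | exact: dvdn0].
Qed.

Section IndependentFamily.
Variables (gT : finGroupType) (G : {group gT}) (n m : nat) (e : 'I_m -> gT).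
Hypotheses (cG : abelian G) (eG : forall i, e i \in G) (n_gt1 : 1 < n).
Hypothesis e_indep : independent n e.

Lemma prod_expgD (a b : 'I_m -> nat) :
  (\prod_i e i ^+ (a i + b i) = \prod_i e i ^+ a i * \prod_i e i ^+ b i)%g.
Proof.
rewrite -prodgM_commute => [|i j _ _]; last exact/commuteX2/(centsP cG).
by apply: eq_bigr => i _; rewrite expgD.
Qed.

Lemma prod_expg_inj (a b : 'I_m -> nat) :
  (\prod_i e i ^+ a i = \prod_i e i ^+ b i)%g -> forall i, a i = b i %[mod n].
Proof.
have n_pred i : n.-1 * b i + b i = n * b i by rewrite -mulSnr prednK // ltnW.
move=> eq_ab i; apply/eqP; rewrite -(eqn_modDr (n.-1 * b i)) [b i + _]addnC n_pred.
have : (\prod_i e i ^+ (a i + n.-1 * b i) == 1)%g.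
  rewrite prod_expgD eq_ab -prod_expgD e_indep; apply/forallP => j.
  by rewrite addnC n_pred dvdn_mulr.
by rewrite e_indep => /forallP/(_ i); rewrite /dvdn modnMr => /eqP ->.
Qed.

Lemma e_prod j : e j = (\prod_i e i ^+ (i == j))%g.
Proof. by rewrite (big_only1 j) // ?eqxx ?expg1 // => i /negbTE ->. Qed.

Lemma e_inj : injective e.
Proof.
move=> i j eq_ij.
have := prod_expg_inj (etrans (esym (e_prod i)) (etrans eq_ij (e_prod j))) i.
by rewrite eqxx; have [//|_] := eqVneq i j; rewrite modn_small // mod0n.
Qed.

Section Monomials.
Variable s : nat.
Let g := (\prod_i e i ^+ s)%g.
Let G0 : {set gT} := g |: [set e i | i : 'I_m].
Hypothesis e_neq_g : forall i, e i != g.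

Lemma G0P x : x \in G0 -> x = g \/ exists i, x = e i.
Proof. by rewrite !inE => /predU1P [->|/imsetP [i _ ->]]; [left | right; exists i]. Qed.

Lemma g_in_G0 : g \in G0. Proof. by rewrite !inE eqxx. Qed.

Lemma e_in_G0 i : e i \in G0. Proof. by rewrite !inE imset_f ?orbT. Qed.

Lemma G0_sub : G0 \subset G.
Proof.
apply/subsetP => x /G0P [->|[i ->]] //.
by apply: group_prod => i _; exact: groupX.
Qed.

Lemma count_notin_G0 S x : seq_over G0 S -> x \notin G0 -> count_mem x S = 0.
Proof. by move=> /allP S_G0 xG0; apply/count_memPn; apply: contra xG0 => /S_G0. Qed.

Definition monom t (u : 'I_m -> nat) : seq gT :=
  nseq t g ++ flatten [seq nseq (u i) (e i) | i <- enum 'I_m].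

Lemma eq_monom t u u' : u =1 u' -> monom t u = monom t u'.
Proof. by move=> eq_u; rewrite /monom; under eq_map => i do rewrite eq_u. Qed.

Lemma monom_over t u : seq_over G0 (monom t u).
Proof.
rewrite /seq_over all_cat all_nseq; apply/andP; split; first exact/orP/or_intror/g_in_G0.
apply/allP => x /flattenP [_ /mapP [i _ ->]]; rewrite mem_nseq => /andP [_ /eqP ->].
exact: e_in_G0.
Qed.

Lemma count_g_monom t u : count_mem g (monom t u) = t.
Proof.
rewrite count_cat count_nseq /= eqxx mul1n count_flatten -map_comp sumnE big_map.
by rewrite big1 ?addn0 // => i _; rewrite /= count_nseq /= (negbTE (e_neq_g i)).
Qed.

Lemma count_e_monom t u i : count_mem (e i) (monom t u) = u i.
Proof.
rewrite count_cat count_nseq /= eq_sym (negbTE (e_neq_g i)) count_flatten.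
rewrite -map_comp sumnE big_map big_enum (bigD1 i) //= count_nseq /= eqxx mul1n.
by rewrite big1 ?addn0 // => j ji; rewrite /= count_nseq /= (inj_eq e_inj) (negbTE ji).
Qed.

Lemma size_monom t u : size (monom t u) = t + \sum_i u i.
Proof.
rewrite size_cat size_nseq size_flatten /shape -map_comp sumnE big_map big_enum.
by congr (_ + _); apply: eq_bigr => i _; rewrite /= size_nseq.
Qed.

Lemma perm_monom S t u : seq_over G0 S -> count_mem g S = t ->
  (forall i, count_mem (e i) S = u i) -> perm_eq S (monom t u).
Proof.
move=> S_G0 St Su; apply/allP => x _; apply/eqP.
case: (boolP (x \in G0)) => [/G0P [->|[i ->]]|xG0].
- by rewrite St count_g_monom.
- by rewrite Su count_e_monom.
- by rewrite !count_notin_G0 ?monom_over.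
Qed.

Lemma prod_over S : seq_over G0 S ->
  (\prod_(x <- S) x = \prod_i e i ^+ (count_mem (e i) S + s * count_mem g S))%g.
Proof.
elim: S => [_|x S IH /andP [/G0P x_G0 /IH {}IH]].
  by rewrite big_nil; apply/esym/big1 => i _; rewrite muln0.
rewrite big_cons IH; case: x_G0 => [->|[j ->]].
  rewrite /g -prod_expgD; apply: eq_bigr => i _ /=.
  by rewrite eq_sym (negbTE (e_neq_g i)) eqxx; congr (_ ^+ _)%g; lia.
rewrite {1}(e_prod j) -prod_expgD; apply: eq_bigr => i _ /=.
by rewrite (negbTE (e_neq_g j)) (inj_eq e_inj) eq_sym add0n addnA.
Qed.

Lemma zero_sum_over S : seq_over G0 S ->
  zero_sum S = [forall i, n %| count_mem (e i) S + s * count_mem g S].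
Proof. by move=> S_G0; rewrite /zero_sum prod_over. Qed.

Lemma zero_sum_monom t u : zero_sum (monom t u) = [forall i, n %| u i + s * t].
Proof.
rewrite zero_sum_over ?monom_over // count_g_monom.
by apply: eq_forallb => i; rewrite count_e_monom.
Qed.

Lemma size_over S : seq_over G0 S ->
  size S = count_mem g S + \sum_i count_mem (e i) S.
Proof. by move=> S_G0; rewrite (perm_size (perm_monom S_G0 erefl (fun=> erefl))) size_monom. Qed.

Lemma monom_atom t u : 0 < t + \sum_i u i ->
    (forall i, n %| u i + s * t) ->
    (forall t' u', t' <= t -> (forall i, u' i <= u i) ->
       (forall i, n %| u' i + s * t') ->
       (t' = 0 /\ forall i, u' i = 0) \/ (t' = t /\ forall i, u' i = u i)) ->
  minimal_zero_sum (monom t u).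
Proof.
move=> tu_gt0 zu tu_min; split.
- by rewrite -size_eq0 size_monom -lt0n.
- by rewrite zero_sum_monom; apply/forallP.
move=> msk; set T := mask msk _.
have T_G0 : seq_over G0 T := all_mask _ (monom_over t u).
have sub_count x : count_mem x T <= count_mem x (monom t u).
  exact/leq_count_subseq/mask_subseq.
have Tt_le : count_mem g T <= t by rewrite -[leqRHS](count_g_monom t u).
have Tu_le i : count_mem (e i) T <= u i by rewrite -(count_e_monom t u i).
rewrite zero_sum_over // => /forallP zT.
have [[T0 Tu0] | [Tt Tu]] := tu_min _ _ Tt_le Tu_le zT.
  by left; apply/eqP; rewrite -size_eq0 size_over // T0 big1.
by right; rewrite size_over // size_monom Tt; congr (_ + _); apply: eq_bigr.
Qed.

Lemma atom_perm_monom A t u : seq_over G0 A -> minimal_zero_sum A ->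
    0 < t + \sum_i u i -> (forall i, n %| u i + s * t) ->
    t <= count_mem g A -> (forall i, u i <= count_mem (e i) A) ->
  perm_eq A (monom t u).
Proof.
move=> A_G0 [_ _ A_min] tu_gt0 zu tA uA.
have [_ /subseqP [msk _ ->] pe] : exists2 T, subseq T A & perm_eq (monom t u) T.
  apply/count_subseqP => x; case: (boolP (x \in G0)) => [/G0P [->|[i ->]]|xG0].
  - by rewrite count_g_monom.
  - by rewrite count_e_monom.
  - by rewrite count_notin_G0 ?monom_over.
have z_mask : zero_sum (mask msk A).
  rewrite zero_sum_over; last exact: all_mask.
  apply/forallP => i.
  by rewrite -!(seq.permP pe) count_e_monom count_g_monom.
case: (A_min msk z_mask) => [mask0 | full].
  by move: tu_gt0; rewrite -size_monom (perm_size pe) mask0.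
suff <- : mask msk A = A by rewrite perm_sym.
by apply/eqP; rewrite -(size_subseq_leqif (mask_subseq msk A)) full.
Qed.

Lemma lengths_monom (I : eqType) (r : seq I) (t : I -> nat) (u : I -> 'I_m -> nat) :
    (forall j, j \in r -> minimal_zero_sum (monom (t j) (u j))) ->
  lengths (monom (\sum_(j <- r) t j) (fun i => \sum_(j <- r) u j i)) (size r).
Proof.
move=> atoms; exists [seq monom (t j) (u j) | j <- r]; split.
- by rewrite size_map.
- by move=> _ /mapP [j jr ->]; exact: atoms.
apply: perm_monom => [|| i].
- by apply/allP => x /flattenP [_ /mapP [j _ ->]]; exact/allP/monom_over.
- rewrite count_flatten -map_comp sumnE big_map.
  by apply: eq_bigr => j _; exact: count_g_monom.
- rewrite count_flatten -map_comp sumnE big_map.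
  by apply: eq_bigr => j _; exact: count_e_monom.
Qed.

Lemma atom_cases A : seq_over G0 A -> minimal_zero_sum A ->
  [\/ perm_eq A (monom n (fun=> 0)),
      exists j, perm_eq A (monom 0 (fun i => n * (i == j)))
    | 0 < count_mem g A < n].
Proof.
move=> A_G0 A_atom; have [A_nil zA _] := A_atom.
move: zA; rewrite zero_sum_over // => /forallP zA.
have [le_n_cg|lt_cg_n] := leqP n (count_mem g A).
  apply: Or31; apply: atom_perm_monom => // [|i].
    by rewrite big1 ?addn0 // ltnW.
  by rewrite add0n dvdn_mull.
have [cg0|cg_gt0] := posnP (count_mem g A); last by apply: Or33; apply/andP.
apply: Or32; case: A A_nil A_G0 A_atom zA cg0 {lt_cg_n} => // x A _ A_G0 A_atom.
have [x_g|[j x_e]] := G0P (allP A_G0 x (mem_head x A)).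
  by rewrite /= x_g eqxx.
move=> zA cg0; exists j; apply/atom_perm_monom => // [||i].
- by rewrite add0n sum_delta ltnW.
- by move=> i; rewrite muln0 addn0 dvdn_mulr.
- have [->|_] := eqVneq i j; last by rewrite muln0.
  rewrite muln1; apply: dvdn_leq; first by rewrite /= x_e eqxx.
  by have := zA j; rewrite cg0 muln0 addn0.
Qed.

Lemma weight_perm_monom c A t u : perm_eq A (monom t u) ->
  \sum_(x <- A) (1 + c * (x == g)) = t + \sum_i u i + c * t.
Proof.
move=> pe; rewrite (perm_big _ pe) big_split /= sum1_size size_monom -big_distrr /=.
congr (_ + c * _); rewrite -[RHS](count_g_monom t u) -sum1_count [RHS]big_mkcond.
by apply: eq_bigr => x _ /=; case: (x == g).
Qed.

Lemma g_pow_atom : 0 < m -> (forall t, n %| s * t -> n %| t) ->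
  minimal_zero_sum (monom n (fun=> 0)).
Proof.
move=> m_gt0 s_coprime; apply: monom_atom => [||t' u' le_t' le_u' z'].
- by rewrite big1 ?addn0 // ltnW.
- by move=> i; rewrite add0n dvdn_mull.
have u'0 i : u' i = 0 by have := le_u' i; lia.
have := z' (Ordinal m_gt0); rewrite u'0 add0n => /s_coprime/dvdn_leq_cases.
by case/(_ le_t') => ->; [left | right].
Qed.

Lemma e_pow_atom j : minimal_zero_sum (monom 0 (fun i => n * (i == j))).
Proof.
apply: monom_atom => [||t' u'].
- by rewrite add0n sum_delta ltnW.
- by move=> i; rewrite muln0 addn0 dvdn_mulr.
rewrite leqn0 => /eqP -> le_u' z'.
have u'_out i : i != j -> u' i = 0.
  by move=> /negbTE ij; have := le_u' i; rewrite ij muln0; lia.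
have := z' j; rewrite muln0 addn0 => /dvdn_leq_cases.
have := le_u' j; rewrite eqxx muln1 => le_u'j /(_ le_u'j) [u'j|u'j].
  by left; split=> // i; have [->//|/u'_out] := eqVneq i j.
right; split=> // i; have [->|ij] := eqVneq i j; first by rewrite u'j muln1.
by rewrite u'_out // muln0.
Qed.

Let B := monom n (fun=> n).

Lemma zero_sum_B : zero_sum B.
Proof. by rewrite zero_sum_monom; apply/forallP => i; rewrite dvdn_add ?dvdn_mull. Qed.

Lemma lengths_B_succ : 0 < m -> (forall t, n %| s * t -> n %| t) -> lengths B m.+1.
Proof.
move=> m_gt0 s_coprime; pose r := None :: [seq Some j | j <- enum 'I_m].
pose t (o : option 'I_m) := if o is Some _ then 0 else n.
pose u (o : option 'I_m) i := if o is Some j then n * (i == j) else 0.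
have atoms o : o \in r -> minimal_zero_sum (monom (t o) (u o)).
  by case/predU1P => [-> | /mapP [j _ ->]]; [exact: g_pow_atom | exact: e_pow_atom].
have := lengths_monom atoms; rewrite /= size_map -cardE card_ord.
rewrite !big_cons big_map big1 // addn0 (@eq_monom _ _ (fun=> n)) // => i.
rewrite big_cons add0n big_map big_enum /=.
by under eq_bigr => j _ do rewrite eq_sym; exact: sum_delta.
Qed.

Section Sum.
Hypotheses (s_eq1 : s = 1) (m_gt1 : 1 < m).

Lemma monom_compl_atom t : 0 < t <= n -> minimal_zero_sum (monom t (fun=> n - t)).
Proof.
move=> /andP [t_gt0 le_tn].
apply: monom_atom => [||t' u' le_t' le_u' z'].
- by rewrite addn_gt0 t_gt0.
- by move=> i; rewrite s_eq1 mul1n subnK.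
have sum_i i : u' i + t' = 0 \/ u' i + t' = n.
  apply: dvdn_leq_cases; first by rewrite -[t' in _ + t']mul1n -s_eq1.
  by have := le_u' i; lia.
have [t'0|t'_gt0] := posnP t'.
  by left; split=> // i; have := le_u' i; have := sum_i i; lia.
have i0 := Ordinal (ltnW m_gt1).
have t't : t' = t by have := le_u' i0; have := sum_i i0; lia.
by right; split=> // i; have := le_u' i; have := sum_i i; lia.
Qed.

Lemma lengths_B_two : lengths B 2.
Proof.
have atoms j : j \in [:: 1; n.-1] -> minimal_zero_sum (monom j (fun=> n - j)).
  by move=> jr; apply: monom_compl_atom; move: jr; rewrite !inE => /orP [] /eqP ->; lia.
have := lengths_monom atoms; rewrite (@eq_monom _ _ (fun=> n)) => [|i].
  by rewrite !big_cons big_nil addn0 add1n prednK // ltnW.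
by rewrite !big_cons big_nil; lia.
Qed.

Lemma atom_weight_sum A : seq_over G0 A -> minimal_zero_sum A ->
  \sum_(x <- A) (1 + (m - 1) * (x == g)) = n %[mod n * (m - 1)].
Proof.
move=> A_G0 A_atom.
case: (atom_cases A_G0 A_atom) => [pe | [j pe] | /andP [cg_gt0 cg_lt]].
- by rewrite (weight_perm_monom _ pe) big1 // addn0 [(m - 1) * n]mulnC modnDr.
- by rewrite (weight_perm_monom _ pe) sum_delta muln0 addn0.
have [_ + _] := A_atom; rewrite zero_sum_over // => /forallP zA.
set t := count_mem g A in cg_gt0 cg_lt zA *.
have pe : perm_eq A (monom t (fun=> n - t)).
  apply: atom_perm_monom => // [||i].
  - by rewrite addn_gt0 cg_gt0.
  - by move=> i; rewrite s_eq1 mul1n subnK // ltnW.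
  - have := dvdn_leq _ (zA i); rewrite s_eq1 mul1n; lia.
rewrite (weight_perm_monom _ pe) sum_nat_const card_ord.
rewrite (_ : _ + _ = 1 * (n * (m - 1)) + n) ?modnMDl //; nia.
Qed.

Lemma Delta_star_sum_family : Delta_star G (m - 1).
Proof.
apply: (Delta_star_of_weight (ltnW n_gt1) atom_weight_sum G0_sub _
  (monom_over n (fun=> n)) zero_sum_B lengths_B_two); first by rewrite subn_gt0.
rewrite (_ : 2 + (m - 1) = m.+1); last by lia.
by apply: lengths_B_succ; [exact: ltnW | move=> t; rewrite s_eq1 mul1n].
Qed.

End Sum.

Section NegSum.
Hypotheses (s_eq : s = n.-1) (m_gt0 : 0 < m) (lt_mn : m.+1 < n).

Lemma g_e_atom : minimal_zero_sum (monom 1 (fun=> 1)).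
Proof.
apply: monom_atom => [||t' u' le_t' le_u' z'] //.
  by move=> i; rewrite s_eq muln1 add1n prednK // ltnW.
case: t' le_t' z' => [|[|//]] _ z'; [left | right]; split=> // i.
  by have := le_u' i; have := z' i; rewrite muln0 addn0 => /dvdn_leq_cases; lia.
by have := le_u' i; have := z' i; rewrite s_eq muln1 => /dvdn_leq_cases; lia.
Qed.

Lemma lengths_B_n : lengths B n.
Proof.
have := lengths_monom (r := nseq n tt) (fun _ _ => g_e_atom).
rewrite (@eq_monom _ _ (fun=> n)) => [|i]; last by rewrite sum1_size size_nseq.
by rewrite sum1_size size_nseq.
Qed.

Lemma atom_weight_neg_sum A : seq_over G0 A -> minimal_zero_sum A ->
  \sum_(x <- A) (1 + (n - m.+1) * (x == g)) = n %[mod n * (n - m.+1)].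
Proof.
move=> A_G0 A_atom.
case: (atom_cases A_G0 A_atom) => [pe | [j pe] | /andP [cg_gt0 cg_lt]].
- by rewrite (weight_perm_monom _ pe) big1 // addn0 [(n - _) * n]mulnC modnDr.
- by rewrite (weight_perm_monom _ pe) sum_delta muln0 addn0.
have [_ + _] := A_atom; rewrite zero_sum_over // => /forallP zA.
have pe : perm_eq A (monom 1 (fun=> 1)).
  apply: atom_perm_monom => // [|i].
    by move=> i; rewrite s_eq muln1 add1n prednK // ltnW.
  rewrite lt0n; apply/eqP => ce0; have := zA i; rewrite ce0 add0n s_eq.
  by move/(dvdn_pred_mul (ltnW n_gt1))/(dvdn_leq cg_gt0); lia.
by rewrite (weight_perm_monom _ pe) sum_nat_const card_ord; congr (_ %% _); lia.
Qed.

Lemma Delta_star_neg_sum_family : Delta_star G (n - m.+1).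
Proof.
have s_coprime t : n %| s * t -> n %| t by rewrite s_eq; apply: dvdn_pred_mul; lia.
apply: (Delta_star_of_weight (ltnW n_gt1) atom_weight_neg_sum G0_sub _
  (monom_over n (fun=> n)) zero_sum_B (lengths_B_succ m_gt0 s_coprime)).
  by rewrite subn_gt0.
by rewrite subnKC; [exact: lengths_B_n | exact: ltnW].
Qed.

End NegSum.

End Monomials.

Theorem Delta_star_independent_sum : 1 < m -> Delta_star G (m - 1).
Proof.
move=> m_gt1; apply: (Delta_star_sum_family (s := 1)) => // i; apply/eqP => e_eq_g.
have [j ji] : exists j, j != i.
  have : 0 < #|predC1 i| by rewrite cardC1 card_ord; lia.
  by case/card_gt0P => j; exists j.
have := prod_expg_inj (etrans (esym (e_prod i)) e_eq_g) j.
by rewrite (negbTE ji) mod0n modn_small.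
Qed.

Theorem Delta_star_independent_neg_sum : 0 < m -> m.+1 < n ->
  Delta_star G (n - m.+1).
Proof.
move=> m_gt0 lt_mn; apply: (Delta_star_neg_sum_family (s := n.-1)) => // i.
apply/eqP => e_eq_g; have := prod_expg_inj (etrans (esym (e_prod i)) e_eq_g) i.
by rewrite eqxx !modn_small //; lia.
Qed.

End IndependentFamily.

Section UnitRows.
Import GRing.Theory.
Local Open Scope ring_scope.
Variables n r : nat.
Hypothesis n_gt1 : (1 < n)%N.

Lemma Zp_nat_eq0 k : ((k%:R : 'Z_n) == 0) = (n %| k)%N.
Proof. by rewrite -val_eqE /= val_Zp_nat. Qed.

Lemma independent_unit_rows :
  independent n (fun i : 'I_r => \row_j (j == i)%:R : 'rV['Z_n]_r).
Proof.
move=> a.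
have -> : (\prod_i (\row_j (j == i)%:R) ^+ a i)%g = \row_j (a j)%:R :> 'rV['Z_n]_r.
  have -> : (\prod_i (\row_j (j == i)%:R) ^+ a i)%g =
            \sum_i (\row_j (j == i)%:R) *+ a i :> 'rV['Z_n]_r.
    by apply: (big_rec2 (fun x y => x = y)) => // i x y _ ->.
  apply/rowP => j; rewrite summxE (bigD1 j) //= big1 => [|i ij].
    by rewrite mulmxnE !mxE eqxx addr0.
  by rewrite mulmxnE mxE eq_sym (negbTE ij) mul0rn.
apply/eqP/forallP => [row0 j | dvd_a].
  by rewrite -Zp_nat_eq0; have /rowP/(_ j) := row0; rewrite !mxE => ->.
by apply/rowP => j; rewrite !mxE; apply/eqP; rewrite Zp_nat_eq0.
Qed.

End UnitRows.

Section Families.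
Local Open Scope group_scope.

Lemma independent_dprod (gT : finGroupType) (E : {group gT}) n m (e : 'I_m -> gT) :
  \big[dprod/1]_(i < m) <[e i]> = E -> (forall i, #[e i] = n) -> independent n e.
Proof.
move=> defE order_e a; apply/eqP/forallP => [prod1 i | dvd_a]; last first.
  by apply: big1 => i _; apply/eqP; rewrite -order_dvdn order_e.
have [c [_ _ c_uniq]] := mem_bigdprod defE (group1 E).
have c_pow := c_uniq (fun i => e i ^+ a i) (fun i _ => mem_cycle _ _) (esym prod1) i isT.
have c_one := c_uniq (fun=> 1) (fun i _ => group1 _) (esym (big1_eq _ _)) i isT.
by rewrite -(order_e i) order_dvdn c_pow -c_one.
Qed.

Lemma rank_independent (gT : finGroupType) (G : {group gT}) :
  exists2 p, prime p &
    exists2 e : 'I_('r(G)) -> gT, (forall i, e i \in G) & independent p e.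
Proof.
have [p p_pr rG] := rank_witness G.
have [E /pnElemP [sEG abE dimE]] := p_rank_witness p G.
have [b defE typeE] := abelian_structure (abelem_abelian abE).
rewrite (abelian_type_abelem abE) (rank_abelem abE) dimE -rG in typeE.
have size_b : size b = 'r(G) by rewrite -(size_map order) typeE size_nseq.
have {}defE : \big[dprod/1]_(i < 'r(G)) <[nth 1 b i]> = E.
  by move: defE; rewrite (big_nth 1) big_mkord size_b.
exists p => //; exists (fun i => nth 1 b i) => [i|].
  apply: subsetP sEG _ _; rewrite -(bigdprodWY defE); apply: mem_gen.
  by apply/bigcupP; exists i => //; exact: cycle_id.
apply: independent_dprod defE _ => i.
by rewrite -(nth_map 1 0%N) ?size_b // typeE nth_nseq ltn_ord.
Qed.

Lemma independent_order (gT : finGroupType) (x : gT) :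
  independent #[x] (fun _ : 'I_1 => x).
Proof.
move=> a; rewrite big_ord1 -order_dvdn.
by apply/idP/forallP => [dvd_a i | /(_ ord0) //]; rewrite (ord1 i).
Qed.

Lemma Delta_star_rank (gT : finGroupType) (G : {group gT}) k :
  abelian G -> 1 <= k <= 'r(G) - 1 -> Delta_star G k.
Proof.
move=> cG /andP [k_gt0 k_lt]; have le_kr : k.+1 <= 'r(G) by lia.
have [p p_pr [e eG e_indep]] := rank_independent G.
have := Delta_star_independent_sum cG (fun i => eG (widen_ord le_kr i))
  (prime_gt1 p_pr) (independent_widen le_kr e_indep).
by rewrite subn1; apply; lia.
Qed.

Lemma Delta_star_exponent (gT : finGroupType) (G : {group gT}) d :
  abelian G -> 3 <= d -> d %| exponent G -> Delta_star G (d - 2).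
Proof.
move=> cG d_ge3 d_dvd; have [x Gx ox] := exponent_witness (abelian_nil cG).
set q := #[x] %/ d; have ox_q : #[x] = (q * d)%N by rewrite divnK // -ox.
have q_gt0 : 0 < q by move: (order_gt0 x); rewrite ox_q muln_gt0 => /andP [].
have oxq : #[x ^+ q] = d by rewrite orderXdiv ox_q ?mulKn // dvdn_mulr.
have := Delta_star_independent_neg_sum cG (fun _ => groupX q Gx) (ltnW d_ge3).
by rewrite -{1 2}oxq; apply=> //; [exact: independent_order | rewrite oxq].
Qed.

Lemma Delta_star_rV n r : 1 < n -> 0 < r -> n <> r.+1 ->
  Delta_star [set: 'rV['Z_n]_r] (if r.+1 <= n then n - r.+1 else r.+1 - n).
Proof.
move=> n_gt1 r_gt0 n_neq; have cG : abelian [set: 'rV['Z_n]_r]%G.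
  exact: FinRing.zmod_abelian.
have rows_in_G i : (\row_j (j == i)%:R : 'rV['Z_n]_r)%R \in [set: 'rV['Z_n]_r]%G.
  by rewrite inE.
have rows_indep := @independent_unit_rows n r n_gt1.
case: (leqP r.+1 n) => [le_rn | lt_nr].
  by apply: (Delta_star_independent_neg_sum cG rows_in_G n_gt1 rows_indep); lia.
have le_r : r.+2 - n <= r by lia.
have := Delta_star_independent_sum cG (fun i => rows_in_G (widen_ord le_r i)) n_gt1
  (independent_widen le_r rows_indep).
by rewrite (_ : r.+2 - n - 1 = r.+1 - n); [apply; lia | lia].
Qed.

End Families.

Theorem lemma6p17 (gT : finGroupType) (G : {group gT}) :
  abelian G -> 3 <= #|G| ->
  [/\ (forall k, 1 <= k <= ('r(G))%g - 1 -> Delta_star G k),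
      (forall d, 3 <= d -> d %| exponent G -> Delta_star G (d - 2)),
      (forall n r : nat, 2 <= n -> 1 <= r -> n <> r.+1 ->
         Delta_star [set: 'rV['Z_n]_r] (if r.+1 <= n then n - r.+1 else r.+1 - n))
    & exists2 d, Delta_star G d & maxn (('r(G))%g - 1) (exponent G - 2) <= d].
Proof.
move=> cG G_ge3; split.
- by move=> k; apply: Delta_star_rank.
- by move=> d; apply: Delta_star_exponent.
- exact: Delta_star_rV.
have rank_or_exp : 2 <= ('r(G))%g \/ 3 <= exponent G.
  case: (leqP 2 ('r(G))%g) => [|r_le1]; [by left | right].
  by rewrite exponent_cyclic // abelian_rank1_cyclic // -ltnS.
case: (leqP (exponent G - 2) (('r(G))%g - 1)) => [le_exp | lt_rank].
  exists (('r(G))%g - 1); last by lia.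
  by apply: Delta_star_rank => //; case: rank_or_exp; lia.
exists (exponent G - 2); last by lia.
by apply: Delta_star_exponent => //; lia.
Qed.
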